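(* Let $\mathbf A$ be a residuated semigroup and $p$ a positive idempotent of $\mathbf A$. The following are equivalent: (1) $pa=ap$ for every $a\in A$; (2) for every $a\in A$, $pa=a$ if and only if $ap=a$; (3) for every $a\in A$, $p\backslash a=a$ if and only if $a/p=a$; (4) for every $a\in A$, $p\backslash a=a/p$; (5) $\{p\backslash a: a\in A\}=\{a/p: a\in A\}$.
   Context: A residuated semigroup is a structure $\langle A,\le,\cdot,\backslash,/\rangle$ where $\langle A,\le\rangle$ is a poset, $\langle A,\cdot\rangle$ is a semigroup (we write $xy$ for $x\cdot y$), and for all $x,y,z$: $xy\le z\iff x\le z/y\iff y\le x\backslash z$. An element $p$ is positive if $a\le pa$ and $a\le ap$ for all $a\in A$; it is idempotent if $pp=p$. *)

(* A residuated semigroup <A, <=, ., \, />, given by its carrier and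
   operations: [le] a partial order, [mul] associative, and
   mul x y <= z  <->  le x (rdiv z y)  <->  le y (ldiv x z),
   where [ldiv x z] is x\z and [rdiv z y] is z/y. *)
Definition is_residuated_semigroup (A : Type) (le : A -> A -> Prop)
    (mul ldiv rdiv : A -> A -> A) : Prop :=
  (forall x, le x x) /\
  (forall x y, le x y -> le y x -> x = y) /\
  (forall x y z, le x y -> le y z -> le x z) /\
  (forall x y z, mul (mul x y) z = mul x (mul y z)) /\
  (forall x y z, (le (mul x y) z <-> le x (rdiv z y)) /\
                 (le x (rdiv z y) <-> le y (ldiv x z))).

Definition is_positive (A : Type) (le : A -> A -> Prop) (mul : A -> A -> A) (p : A) : Prop :=
  forall a, le a (mul p a) /\ le a (mul a p).

Definition is_idempotent (A : Type) (mul : A -> A -> A) (p : A) : Prop :=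
  mul p p = p.

From Stdlib Require Import Setoid.
From Corelib Require Import ssreflect.

(* Positivity makes [p\a] and [a/p] decreasing, so [p\a = a] iff [pa = a] and
   [a/p = a] iff [ap = a]; hence (2) and (3) say the same thing.  By
   idempotence [pa] is a left fixpoint and [ap] a right fixpoint, so under (2)
   both [pap = pa] and [pap = ap], giving (1).  Under (1), [p\a] and [a/p]
   have the same lower bounds, giving (4); (4) trivially gives (5); and since
   [p\(p\b) = p\b] and [(b/p)/p = b/p], the two images in (5) are exactly the
   left and right fixpoints, giving (3). *)

Section ResiduatedSemigroup.

Context {A : Type} {le : A -> A -> Prop} {mul ldiv rdiv : A -> A -> A}.

Hypothesis le_refl : forall x, le x x.
Hypothesis le_anti : forall x y, le x y -> le y x -> x = y.
Hypothesis le_trans : forall x y z, le x y -> le y z -> le x z.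
Hypothesis mulA : forall x y z, mul (mul x y) z = mul x (mul y z).
Hypothesis mul_le_rdiv : forall x y z, le (mul x y) z <-> le x (rdiv z y).
Hypothesis rdiv_le_ldiv : forall x y z, le x (rdiv z y) <-> le y (ldiv x z).

Lemma mul_le_ldiv x y z : le (mul x y) z <-> le y (ldiv x z).
Proof. rewrite mul_le_rdiv; apply rdiv_le_ldiv. Qed.

Lemma mul_ldiv_le x z : le (mul x (ldiv x z)) z.
Proof. apply mul_le_ldiv, le_refl. Qed.

Lemma mul_rdiv_le z y : le (mul (rdiv z y) y) z.
Proof. apply mul_le_rdiv, le_refl. Qed.

Context {p : A}.
Hypothesis p_pos_l : forall a, le a (mul p a).
Hypothesis p_pos_r : forall a, le a (mul a p).
Hypothesis p_idem : mul p p = p.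

Lemma ldiv_pos_le a : le (ldiv p a) a.
Proof. exact: le_trans _ _ _ (p_pos_l _) (mul_ldiv_le _ _). Qed.

Lemma rdiv_pos_le a : le (rdiv a p) a.
Proof. exact: le_trans _ _ _ (p_pos_r _) (mul_rdiv_le _ _). Qed.

Lemma ldiv_fixed_iff a : ldiv p a = a <-> mul p a = a.
Proof.
split=> E.
- apply: le_anti (p_pos_l a); apply/mul_le_ldiv; rewrite E; apply: le_refl.
- apply: le_anti (ldiv_pos_le a) _; apply/mul_le_ldiv; rewrite E; apply: le_refl.
Qed.

Lemma rdiv_fixed_iff a : rdiv a p = a <-> mul a p = a.
Proof.
split=> E.
- apply: le_anti (p_pos_r a); apply/mul_le_rdiv; rewrite E; apply: le_refl.
- apply: le_anti (rdiv_pos_le a) _; apply/mul_le_rdiv; rewrite E; apply: le_refl.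
Qed.

Lemma ldiv_idem b : ldiv p (ldiv p b) = ldiv p b.
Proof.
apply/ldiv_fixed_iff; apply: le_anti (p_pos_l _).
by rewrite -mul_le_ldiv -mulA p_idem; apply: mul_ldiv_le.
Qed.

Lemma rdiv_idem b : rdiv (rdiv b p) p = rdiv b p.
Proof.
apply/rdiv_fixed_iff; apply: le_anti (p_pos_r _).
by rewrite -mul_le_rdiv mulA p_idem; apply: mul_rdiv_le.
Qed.

Lemma commute_of_fixed_iff :
  (forall a, mul p a = a <-> mul a p = a) -> forall a, mul p a = mul a p.
Proof.
move=> fixed a.
have left_fixed : mul (mul p a) p = mul p a by apply/fixed; rewrite -mulA p_idem.
have right_fixed : mul p (mul a p) = mul a p by apply/fixed; rewrite mulA p_idem.
by rewrite -left_fixed mulA right_fixed.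
Qed.

Lemma ldiv_eq_rdiv_of_commute :
  (forall a, mul p a = mul a p) -> forall a, ldiv p a = rdiv a p.
Proof.
move=> pC a; apply: le_anti.
- by apply/mul_le_rdiv; rewrite -pC; apply: mul_ldiv_le.
- by apply/mul_le_ldiv; rewrite pC; apply: mul_rdiv_le.
Qed.

Lemma fixed_of_same_image :
  (forall x, (exists a, x = ldiv p a) <-> (exists a, x = rdiv a p)) ->
  forall a, ldiv p a = a <-> rdiv a p = a.
Proof.
move=> same a; split=> E.
- have [b ->] : exists b, a = rdiv b p by apply/same; exists a.
  exact: rdiv_idem.
- have [b ->] : exists b, a = ldiv p b by apply/same; exists a.
  exact: ldiv_idem.
Qed.

End ResiduatedSemigroup.

Theorem proposition2p5 (A : Type) (le : A -> A -> Prop) (mul ldiv rdiv : A -> A -> A)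
  (p : A)
  (HA : is_residuated_semigroup A le mul ldiv rdiv)
  (Hpos : is_positive A le mul p) (Hidem : is_idempotent A mul p) :
  let c1 := forall a, mul p a = mul a p in
  let c2 := forall a, mul p a = a <-> mul a p = a in
  let c3 := forall a, ldiv p a = a <-> rdiv a p = a in
  let c4 := forall a, ldiv p a = rdiv a p in
  let c5 := forall x, (exists a, x = ldiv p a) <-> (exists a, x = rdiv a p) in
  (c1 <-> c2) /\ (c1 <-> c3) /\ (c1 <-> c4) /\ (c1 <-> c5).
Proof.
case: HA => refl [anti [trans [assoc resid]]].
have mul_rdiv x y z := proj1 (resid x y z).
have rdiv_ldiv x y z := proj2 (resid x y z).
have pos_l a := proj1 (Hpos a); have pos_r a := proj2 (Hpos a).
move=> c1 c2 c3 c4 c5.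
have c12 : c1 -> c2 by move=> pC a; rewrite pC.
have c21 : c2 -> c1 := commute_of_fixed_iff assoc Hidem.
have fixed_l := ldiv_fixed_iff refl anti trans mul_rdiv rdiv_ldiv pos_l.
have fixed_r := rdiv_fixed_iff refl anti trans mul_rdiv pos_r.
have c23 : c2 <-> c3.
  by split=> fixed a; move: (fixed a) (fixed_l a) (fixed_r a); tauto.
have c14 : c1 -> c4 := ldiv_eq_rdiv_of_commute refl anti mul_rdiv rdiv_ldiv.
have c45 : c4 -> c5.
  by move=> E x; split=> -[a ->]; exists a; rewrite E.
have c53 : c5 -> c3 :=
  fixed_of_same_image refl anti trans assoc mul_rdiv rdiv_ldiv pos_l pos_r Hidem.
tauto.
Qed.
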